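(* Let $t\in(-1,1)$ and $m,n$ integers. (i) If $t\neq0$ and $n-2\ge m\ge0$, then $\det\begin{pmatrix}P_n^m(t)&P_{n-2}^m(t)\\(P_n^m)'(t)&(P_{n-2}^m)'(t)\end{pmatrix}\neq0$. (ii) For $0\le m\le n$, $P_n^m(t)$ and $(P_n^m)'(t)$ do not vanish simultaneously.
   Context: $P_n$ is the Legendre polynomial of degree $n\in\mathbb{N}_0$ and $P_n^m(t)=(1-t^2)^{m/2}\frac{d^m}{dt^m}P_n(t)$, $0\le m\le n$, are the associated Legendre functions of the first kind. *)

From HB Require Import structures.
From mathcomp Require Import all_boot all_order all_algebra.
From mathcomp Require Import all_classical all_reals all_analysis.
Set Implicit Arguments. Unset Strict Implicit. Unset Printing Implicit Defensive.
Import Order.TTheory GRing.Theory Num.Theory.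
Local Open Scope ring_scope.

Definition legendre (R : realType) (n : nat) : {poly R} :=
  ((2%:R ^+ n * (n`!)%:R)^-1) *: ((('X ^+ 2 - 1) ^+ n) ^`(n)).

Definition assoc_legendre (R : realType) (n m : nat) (t : R) : R :=
  (Num.sqrt (1 - t ^+ 2)) ^+ m * ((legendre R n) ^`(m)).[t].

From HB Require Import structures.
From mathcomp Require Import all_boot all_order all_algebra.
From mathcomp Require Import all_classical all_reals all_analysis.
From mathcomp Require Import ring lra zify.
Import Order.TTheory GRing.Theory Num.Theory.
Local Open Scope ring_scope.

(* Write D_k for the m-th derivative of P_(m+k), so that P_(m+k)^m = (1 - t^2)^(m/2) D_k(t).
   Differentiating Bonnet's recursion m times gives a three-term recurrence
   a_k D_(k+2) = b_k X D_(k+1) - c_k D_k with positive a_k = k + 2, b_k = 2(m+k) + 3,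
   c_k = 2m + k + 1, and the weight (1 - t^2)^(m/2) factors out of every Wronskian, so (i)
   asks that W_k = x_(k+2) y_k - x_k y_(k+2) is nonzero, where x_k = D_k(t), y_k = D_k'(t).
   With q_k = t (x_(k+1) y_k - x_k y_(k+1)) - x_k x_(k+1) the recurrence gives a_k W_k = b_k q_k
   and a_k a_(k+1) q_(k+2) = c_(k+1) c_k q_k - 2 a_k b_(k+1) t x_(k+2)^2, whose last term has the
   sign of -t. As D_0 is a nonzero constant and D_1 = (2m+1) X D_0, both t q_0 and t q_1 are
   negative, hence so is every t q_k.
   For (ii), Legendre's differential equation propagates a common zero of D and D' at t with
   t^2 <> 1 to all higher derivatives of P_n, but the n-th one is a nonzero constant. *)

Lemma eq_of_sub_eq {V : zmodType} {a b c d : V} : c = d -> a - b = c - d -> a = b.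
Proof. by move=> cd abcd; apply/subr0_eq; rewrite abcd cd subrr. Qed.

Section Leibniz.
Context {R : comNzRingType}.
Implicit Type p : {poly R}.

Lemma derivn_mulX p k : ('X * p)^`(k.+1) = 'X * p^`(k.+1) + p^`(k) *+ k.+1.
Proof. by rewrite -[_ * p]addr0 -polyC0 mulrC derivnMXaddC addrC mulrC. Qed.

Lemma deriv_X2B1 : ('X ^+ 2 - 1 : {poly R})^`() = 'X *+ 2.
Proof. by rewrite derivB derivXn derivC subr0. Qed.

Lemma derivn_mulX2B1 p k : (('X ^+ 2 - 1) * p)^`(k.+2) =
  ('X ^+ 2 - 1) * p^`(k.+2) + ('X * p^`(k.+1)) *+ (2 * k.+2) + p^`(k) *+ (k.+2 * k.+1).
Proof.
have -> : ('X ^+ 2 - 1) * p = 'X * ('X * p) - p by ring.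
rewrite derivnB !derivn_mulX; ring.
Qed.

End Leibniz.

Section LegendreRecurrences.
Variable R : realType.
Local Notation P n := (legendre R n).

Definition rodrigues n : {poly R} := ('X ^+ 2 - 1) ^+ n.
Definition rodrigues_coef n : R := (2 ^+ n * n`!%:R)^-1.

Lemma legendreE n : P n = rodrigues_coef n *: (rodrigues n)^`(n).
Proof. by []. Qed.

Lemma rodrigues_coefS n : rodrigues_coef n.+1 * (2 * n.+1)%:R = rodrigues_coef n.
Proof.
rewrite /rodrigues_coef factS natrM natrM exprS.
have nz2 : (2 : R) != 0 by rewrite pnatr_eq0.
have nzF : (n`!%:R : R) != 0 by rewrite pnatr_eq0 -lt0n fact_gt0.
by field; rewrite nzF expf_neq0 // nat1r pnatr_eq0.
Qed.

Lemma deriv_rodriguesS n : (rodrigues n.+1)^`() = (2 * n.+1)%:R *: ('X * rodrigues n).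
Proof.
rewrite /rodrigues deriv_exp derivB derivXn derivC subr0 /= -scaler_nat -!mul_polyC.
by rewrite natrM polyCM; ring.
Qed.

Lemma legendre0 : P 0 = 1.
Proof.
by rewrite legendreE /rodrigues_coef /rodrigues !expr0 derivn0 fact0 mul1r invr1 scale1r.
Qed.

Lemma legendre1 : P 1 = 'X.
Proof.
rewrite legendreE derivn1 deriv_rodriguesS /rodrigues expr0 mulr1 scalerA.
by rewrite /rodrigues_coef mulr1 expr1 mulVf ?scale1r // pnatr_eq0.
Qed.

Lemma deriv_legendreS n : (P n.+1)^`() = 'X * (P n)^`() + n.+1%:R *: P n.
Proof.
rewrite !legendreE !derivZ -!derivnS derivSn deriv_rodriguesS derivnZ derivn_mulX.
by rewrite -(rodrigues_coefS n) -!mul_polyC; ring.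
Qed.

Lemma mulX2B1_deriv_legendre n : ('X ^+ 2 - 1) * (P n)^`() = n.+1%:R *: (P n.+1 - 'X * P n).
Proof.
case: n => [|n]; first by rewrite legendre0 legendre1 -polyC1 derivC mulr0 mulr1 subrr scaler0.
set U := rodrigues n.+1.
(* Expand the (n+2)-th derivative of rodrigues n.+2 = (X^2 - 1) U in two ways. *)
have via_deriv : (rodrigues n.+2)^`(n.+2) = (2 * n.+2)%:R *: ('X * U^`(n.+1) + U^`(n) *+ n.+1).
  by rewrite derivSn deriv_rodriguesS derivnZ derivn_mulX.
have lower : ('X ^+ 2 - 1) * U^`(n.+2) = U^`(n) *+ (n.+2 * n.+1).
  have := derivn_mulX2B1 U n; rewrite -exprS -/(rodrigues n.+2) via_deriv => leib.
  by apply: (eq_of_sub_eq (esym leib)); rewrite -!mul_polyC; ring.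
rewrite !legendreE derivZ -derivnS -/U -scalerAr lower via_deriv -(rodrigues_coefS n.+1).
by rewrite -!mul_polyC; ring.
Qed.

Lemma legendre_bonnet n :
  n.+2%:R *: P n.+2 = (2 * n + 3)%:R *: ('X * P n.+1) - n.+1%:R *: P n.
Proof.
have := mulX2B1_deriv_legendre n.+1.
rewrite deriv_legendreS mulrDr mulrCA mulX2B1_deriv_legendre => rec.
by apply: (eq_of_sub_eq (esym rec)); rewrite -!mul_polyC; ring.
Qed.

Lemma deriv_legendreSS_sub n : (P n.+2)^`() - (P n)^`() = (2 * n + 3)%:R *: P n.+1.
Proof.
rewrite !deriv_legendreS.
by apply: (eq_of_sub_eq (mulX2B1_deriv_legendre n)); rewrite -!mul_polyC; ring.
Qed.

Lemma legendre_ode n j :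
  ('X ^+ 2 - 1) * (P n)^`(j.+2) + (2 * j.+1)%:R *: ('X * (P n)^`(j.+1))
  + (j * j.+1)%:R *: (P n)^`(j) = (n * n.+1)%:R *: (P n)^`(j).
Proof.
elim: j => [|j IH].
  have := congr1 deriv (mulX2B1_deriv_legendre n).
  rewrite (derivM ('X ^+ 2 - 1)) deriv_X2B1 (derivZ n.+1%:R) derivB deriv_legendreS.
  rewrite (derivM 'X) derivX !derivn0 derivnS derivn1 => ode.
  by apply: (eq_of_sub_eq ode); rewrite -!mul_polyC; ring.
have := congr1 deriv IH.
rewrite !derivD !derivZ (derivM ('X ^+ 2 - 1)) deriv_X2B1 (derivM 'X) derivX -!derivnS => ode.
by apply: (eq_of_sub_eq ode); rewrite -!mul_polyC; ring.
Qed.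

Lemma derivn_legendre_gt n : (P n)^`(n.+1) = 0.
Proof.
rewrite legendreE derivnZ.
have -> : (rodrigues n)^`(n)^`(n.+1) = (rodrigues n)^`(n.+1 + n) by rewrite /derivn iterD.
rewrite derivn_poly0 ?scaler0 //.
rewrite (leq_trans (size_poly_exp_leq _ _)) // -polyC1 size_XnsubC //=; lia.
Qed.

Lemma derivn_legendre_rec m n : (n.+2%:R - m%:R) *: (P n.+2)^`(m) =
  (2 * n + 3)%:R *: ('X * (P n.+1)^`(m)) - (n.+1 + m)%:R *: (P n)^`(m).
Proof.
case: m => [|m]; first by rewrite subr0 addn0 !derivn0 legendre_bonnet.
(* Leibniz's rule on X P_(n+1) leaves a term m P_(n+1)^(m-1); [step] rewrites it. *)
have bonnet := congr1 (derivn m.+1) (legendre_bonnet n).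
rewrite derivnB (derivnZ _ n.+2%:R) (derivnZ _ (2 * n + 3)%:R) (derivnZ _ n.+1%:R) in bonnet.
rewrite derivn_mulX in bonnet.
have step := congr1 (derivn m) (deriv_legendreSS_sub n).
rewrite derivnB (derivnZ _ (2 * n + 3)%:R) -!derivSn in step.
rewrite scalerBl bonnet scalerDr -scalerMnr -step.
by rewrite -!mul_polyC; ring.
Qed.

Lemma derivn_legendreS n : (P n.+1)^`(n) = (2 * n + 1)%:R *: ('X * (P n)^`(n)).
Proof.
case: n => [|n]; first by rewrite !derivn0 legendre1 legendre0 mulr1 scale1r.
have := derivn_legendre_rec n.+1 n.
rewrite derivn_legendre_gt scaler0 subr0 -natrB // subSnn scale1r => ->.
by congr (_%:R *: _); lia.
Qed.

Lemma derivn_legendre_const n : exists2 c : R, 0 < c & (P n)^`(n) = c%:P.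
Proof.
elim: n => [|n [c c_gt0 IH]]; first by exists 1; rewrite ?ltr01 // derivn0 legendre0.
exists ((2 * n + 1)%:R * c); first by rewrite mulr_gt0 // ltr0n addn1.
rewrite derivnS derivn_legendreS IH derivZ derivM derivX derivC mulr0 addr0 mul1r.
by rewrite polyCM -mul_polyC.
Qed.

End LegendreRecurrences.

Section ThreeTermWronskian.
Context {R : realDomainType} {a b c : nat -> R} {D : nat -> {poly R}} {t u d : R}.
Hypothesis D_rec : forall k, a k *: D k.+2 = b k *: ('X * D k.+1) - c k *: D k.

Local Notation x k := (D k).[t].
Local Notation y k := (D k)^`().[t].

Lemma horner_three_term k : a k * x k.+2 = b k * t * x k.+1 - c k * x k.
Proof.
have := congr1 (horner^~ t) (D_rec k).
by rewrite /= hornerD hornerN !hornerZ hornerM hornerX mulrA.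
Qed.

Lemma horner_deriv_three_term k :
  a k * y k.+2 = b k * (x k.+1 + t * y k.+1) - c k * y k.
Proof.
have := congr1 (fun p => p^`().[t]) (D_rec k).
by rewrite /= derivB !derivZ derivM derivX mul1r hornerD hornerN !hornerZ hornerD hornerM hornerX.
Qed.

Let q k := t * (x k.+1 * y k - x k * y k.+1) - x k * x k.+1.

Lemma wronskian2_q k : a k * (x k.+2 * y k - x k * y k.+2) = b k * q k.
Proof.
transitivity ((a k * x k.+2) * y k - x k * (a k * y k.+2)); first by ring.
by rewrite horner_three_term horner_deriv_three_term /q; ring.
Qed.

Lemma q_half_step k :
  a k * (t * (x k.+2 * y k.+1 - x k.+1 * y k.+2) + x k.+1 * x k.+2) = c k * q k.
Proof.
transitivity (t * ((a k * x k.+2) * y k.+1 - x k.+1 * (a k * y k.+2))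
  + x k.+1 * (a k * x k.+2)); first by ring.
by rewrite horner_three_term horner_deriv_three_term /q; ring.
Qed.

Lemma q_rec k : a k * a k.+1 * q k.+2 =
  c k.+1 * c k * q k - 2 * a k * b k.+1 * t * x k.+2 ^+ 2.
Proof.
have shift : a k.+1 * q k.+2 = c k.+1 * (t * (x k.+2 * y k.+1 - x k.+1 * y k.+2)
    + x k.+1 * x k.+2) - 2 * b k.+1 * t * x k.+2 ^+ 2.
  transitivity (t * ((a k.+1 * x k.+3) * y k.+2 - x k.+2 * (a k.+1 * y k.+3))
    - x k.+2 * (a k.+1 * x k.+3)); first by rewrite /q; ring.
  by rewrite horner_three_term horner_deriv_three_term; ring.
by rewrite -mulrA shift mulrBr mulrCA q_half_step; ring.
Qed.

Hypotheses (a_gt0 : forall k, 0 < a k) (b_gt0 : forall k, 0 < b k)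
  (c_gt0 : forall k, 0 < c k).
Hypotheses (u_gt0 : 0 < u) (d_neq0 : d != 0) (t_neq0 : t != 0).
Hypotheses (D0 : D 0 = d%:P) (D1 : D 1 = u *: ('X * D 0)).

Lemma tq_lt0 k : t * q k < 0.
Proof.
have x1 : x 1 = u * t * d by rewrite D1 D0 hornerZ hornerM hornerX hornerC mulrA.
have y1 : y 1 = u * d.
  by rewrite D1 D0 derivZ derivM derivX derivC mulr0 addr0 mul1r hornerZ hornerC.
have y0 : y 0 = 0 by rewrite D0 derivC horner0.
have x0 : x 0 = d by rewrite D0 hornerC.
have two_gt0 : (0 : R) < 2 := ltr0Sn _ 1.
suff : t * q k < 0 /\ t * q k.+1 < 0 by case.
elim: k => [|k [IH IH1]]; last split => //.
  split.
    have -> : t * q 0 = - (2 * u * (t * d) ^+ 2) by rewrite /q x1 y1 x0 y0; ring.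
    rewrite oppr_lt0; apply: mulr_gt0 (mulr_gt0 two_gt0 u_gt0) _.
    by rewrite exprn_even_gt0 // mulf_neq0.
  have E : a 0 * (t * q 1) = - (2 * b 0 * (u * t * (t * d)) ^+ 2).
    transitivity (t * (t * ((a 0 * x 2) * y 1 - x 1 * (a 0 * y 2)) - x 1 * (a 0 * x 2))).
      by rewrite /q; ring.
    by rewrite horner_three_term horner_deriv_three_term x1 y1 x0 y0; ring.
  rewrite -(pmulr_rlt0 _ (a_gt0 0)) E oppr_lt0.
  apply: mulr_gt0 (mulr_gt0 two_gt0 (b_gt0 0)) _.
  by rewrite exprn_even_gt0 // !mulf_neq0 // gt_eqF.
have E : a k * a k.+1 * (t * q k.+2) =
    c k.+1 * c k * (t * q k) - 2 * a k * b k.+1 * (t * x k.+2) ^+ 2.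
  by rewrite mulrCA q_rec; ring.
rewrite -(pmulr_rlt0 _ (mulr_gt0 (a_gt0 k) (a_gt0 k.+1))) E.
have neg : c k.+1 * c k * (t * q k) < 0 by rewrite pmulr_rlt0 ?mulr_gt0.
have nonneg : 0 <= 2 * a k * b k.+1 * (t * x k.+2) ^+ 2.
  apply: mulr_ge0 (sqr_ge0 _).
  exact/ltW/(mulr_gt0 (mulr_gt0 two_gt0 (a_gt0 k)) (b_gt0 k.+1)).
lra.
Qed.

Lemma three_term_wronskian2_neq0 k : x k.+2 * y k - x k * y k.+2 != 0.
Proof.
apply: contraTneq (tq_lt0 k) => W0.
have : b k * q k = 0 by rewrite -wronskian2_q W0 mulr0.
by move/eqP; rewrite mulf_eq0 gt_eqF //= => /eqP ->; rewrite mulr0 ltxx.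
Qed.

End ThreeTermWronskian.

Section ProductRule.
Context {R : realType}.
Implicit Types (w f g : R -> R) (t : R).

Lemma derive1M f g t : derivable f t 1 -> derivable g t 1 ->
  derive1 (f * g) t = f t * derive1 g t + g t * derive1 f t.
Proof. by move=> df dg; rewrite !derive1E deriveM. Qed.

Lemma wronskian_mull w f g t :
  derivable w t 1 -> derivable f t 1 -> derivable g t 1 ->
  (w * f) t * derive1 (w * g) t - (w * g) t * derive1 (w * f) t =
  w t ^+ 2 * (f t * derive1 g t - g t * derive1 f t).
Proof. by move=> dw df dg; rewrite !derive1M // !mulrfctE; ring. Qed.

Lemma derivable_sqrt1B_sqr t :
  t ^+ 2 < 1 -> derivable (fun s : R => Num.sqrt (1 - s ^+ 2)) t 1.
Proof.
move=> t2_lt1.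
have -> : (fun s : R => Num.sqrt (1 - s ^+ 2)) = Num.sqrt \o horner (1 - 'X ^+ 2).
  by apply/funext => s /=; rewrite hornerD hornerN hornerXn hornerC.
apply: ex_derive; apply: is_derive1_comp.
by apply: is_derive1_sqrt; rewrite hornerD hornerN hornerXn hornerC subr_gt0.
Qed.

End ProductRule.

Section AssociatedLegendre.
Context {R : realType}.
Local Notation P n := (legendre R n).
Local Notation w m := ((fun s : R => Num.sqrt (1 - s ^+ 2)) ^+ m).

Lemma assoc_legendreE n m : assoc_legendre n m = w m * horner ((P n)^`(m)).
Proof. by apply/funext => s; rewrite /assoc_legendre mulrfctE exprfctE. Qed.

Lemma derivn_legendre_wronskian2_neq0 m k {t : R} : t != 0 ->
  (P (m + k.+2))^`(m).[t] * (P (m + k))^`(m)^`().[t]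
  - (P (m + k))^`(m).[t] * (P (m + k.+2))^`(m)^`().[t] != 0.
Proof.
move=> t_neq0; have [d d_gt0 Dm] := derivn_legendre_const R m.
apply: (three_term_wronskian2_neq0 (D := fun j => (P (m + j))^`(m))
  (a := fun j => (m + j).+2%:R - m%:R) (b := fun j => (2 * (m + j) + 3)%:R)
  (c := fun j => ((m + j).+1 + m)%:R) (u := (2 * m + 1)%:R) (d := d)) => //.
- by move=> j /=; rewrite (addnS m j.+1) (addnS m j) derivn_legendre_rec.
- by move=> j; rewrite subr_gt0 ltr_nat; lia.
- by rewrite gt_eqF.
- by rewrite addn0.
- by rewrite addn1 addn0 derivn_legendreS.
Qed.

Lemma derivn_legendre_no_common_root {n m : nat} {t : R} : (m <= n)%N -> t ^+ 2 != 1 ->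
  ~ ((P n)^`(m).[t] = 0 /\ (P n)^`(m.+1).[t] = 0).
Proof.
move=> le_mn t2_neq1 [root0 root1].
have roots j : (P n)^`(m + j).[t] = 0 /\ (P n)^`((m + j).+1).[t] = 0.
  elim: j => [|j [IH IH1]]; first by rewrite addn0.
  split; first by rewrite addnS.
  have := congr1 (horner^~ t) (legendre_ode R n (m + j)).
  rewrite /= -!derivnS !hornerD !hornerZ !hornerM IH IH1 !mulr0 !addr0 addnS.
  move=> /eqP; rewrite mulf_eq0 hornerD hornerN hornerXn hornerC subr_eq0.
  by rewrite (negPf t2_neq1) => /eqP.
have [c c_gt0 Dn] := derivn_legendre_const R n.
by move: (roots (n - m)%N).1; rewrite subnKC // Dn hornerC => c0; rewrite c0 ltxx in c_gt0.
Qed.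

End AssociatedLegendre.

Theorem propositionA5 (R : realType) (m n : nat) (t : R) :
  -1 < t < 1 ->
  ((t != 0 -> (m + 2 <= n)%N ->
      assoc_legendre (R:=R) n m t * derive1 (assoc_legendre (R:=R) (n - 2) m) t
      - assoc_legendre (R:=R) (n - 2) m t * derive1 (assoc_legendre (R:=R) n m) t != 0)
   /\
   ((m <= n)%N ->
      ~ (assoc_legendre (R:=R) n m t = 0 /\ derive1 (assoc_legendre (R:=R) n m) t = 0))).
Proof.
move=> /andP[t_gtN1 t_lt1].
have t2_lt1 : t ^+ 2 < 1 by nra.
set w := (fun s : R => Num.sqrt (1 - s ^+ 2)) ^+ m.
have dw : derivable w t 1 by apply/derivableX/derivable_sqrt1B_sqr.
have w_gt0 : 0 < w t by rewrite /w exprfctE exprn_gt0 // sqrtr_gt0 subr_gt0.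
split=> [t_neq0 le_m2n | le_mn].
  have [k ->] : exists k, n = (m + k.+2)%N by exists (n - m - 2)%N; lia.
  rewrite (_ : (m + k.+2 - 2)%N = (m + k)%N); last by lia.
  rewrite !assoc_legendreE wronskian_mull ?derivable_horner // -!derivE.
  by rewrite mulf_neq0 ?expf_neq0 ?(derivn_legendre_wronskian2_neq0 m k t_neq0) ?gt_eqF.
rewrite assoc_legendreE derive1M ?derivable_horner // -derivE mulrfctE /= => -[x0 y0].
have {}x0 : (legendre R n)^`(m).[t] = 0 by move/eqP: x0; rewrite mulf_eq0 gt_eqF //= => /eqP.
move: y0; rewrite x0 mul0r addr0 => /eqP; rewrite mulf_eq0 gt_eqF //= => /eqP y0.
apply: (derivn_legendre_no_common_root le_mn _ (conj x0 _)); first by rewrite lt_eqF.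
by rewrite derivnS.
Qed.
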